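(* For integers $0\le k\le n-1$ and $\lambda\in\mathbb C$, \[ d^k_n(\lambda)=\big(n+(\lambda-1)\big)\,d^k_{n-1}(\lambda)-(\lambda-1)(n-k-1)\,d^k_{n-2}(\lambda), \] where the last term is interpreted as $0$ when $k=n-1$.
   Context: For $\lambda\in\mathbb C$ and integers $0\le k\le n$, define $e^k_n(\lambda)$ by $e^n_n(\lambda)=n!$ and, for $1\le k\le n$, $e^{k-1}_n(\lambda)=e^k_n(\lambda)+(\lambda-1)e^{k-1}_{n-1}(\lambda)$. Put $d^k_n(\lambda)=e^k_n(\lambda)/k!$. (For nonnegative integer $\lambda$, $d^k_n(\lambda)$ counts permutations of $[n]$ whose first $k$ entries are decreasing, where each fixed point among the last $n-k$ positions is given one of $\lambda$ colours.) *)

From mathcomp Require Import all_boot all_order all_algebra.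
Set Implicit Arguments. Unset Strict Implicit. Unset Printing Implicit Defensive.
Import Order.TTheory GRing.Theory Num.Theory.
Local Open Scope ring_scope.

(* Auxiliary reindexing: eaux l n j = e^{n-j}_n(l) for j <= n.
   eaux l n 0 = n!,  eaux l n (j+1) = eaux l n j + (l-1) * eaux l (n-1) j,
   which is exactly e^{k-1}_n = e^k_n + (l-1) e^{k-1}_{n-1} with k = n - j. *)
Fixpoint eaux {C : numClosedFieldType} (l : C) (n j : nat) : C :=
  match j with
  | 0 => (n`!)%:R
  | j'.+1 => eaux l n j' + (l - 1) * eaux l n.-1 j'
  end.

(* e^k_n(l), meaningful for 0 <= k <= n. *)
Definition ecoef {C : numClosedFieldType} (l : C) (n k : nat) : C :=
  eaux l n (n - k).

Definition dcoef {C : numClosedFieldType} (l : C) (n k : nat) : C :=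
  ecoef l n k / (k`!)%:R.

Lemma ecoef_nn {C : numClosedFieldType} (l : C) (n : nat) : ecoef l n n = (n`!)%:R.
Proof. by rewrite /ecoef subnn. Qed.

Lemma ecoef_rec {C : numClosedFieldType} (l : C) (n k : nat) : (1 <= k <= n)%N ->
  ecoef l n k.-1 = ecoef l n k + (l - 1) * ecoef l n.-1 k.-1.
Proof.
case: k => // k /andP[_ hk]; rewrite /ecoef /=.
have -> : (n - k = (n - k.+1).+1)%N by rewrite subnSK.
rewrite /=; congr (_ + _ * eaux _ _ _).
by case: n hk => // n hk; rewrite subSS.
Qed.

From mathcomp Require Import all_boot all_order all_algebra.
From mathcomp Require Import ring.
Import Order.TTheory GRing.Theory Num.Theory.
Local Open Scope ring_scope.

(* Indexing by the codimension [j = n - k], the numbers [E n j = e^{n-j}_n]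
   satisfy [E (m+1) (j+1) = (m+1 + (l-1)) E m j - (l-1) j E (m-1) (j-1)] for
   [j <= m]. This follows by induction on [j], using only the defining
   recurrence [E n (j+1) = E n j + (l-1) E (n-1) j] twice, once at [m+1] and once
   at [m]. Dividing by [k!] with [n = m+1], [j = m-k] gives the theorem, since
   [j = 0] exactly when [k = n-1]. *)

Lemma eauxS {C : numClosedFieldType} (l : C) (n j : nat) :
  eaux l n j.+1 = eaux l n j + (l - 1) * eaux l n.-1 j.
Proof. by []. Qed.

Lemma eaux_three_term {C : numClosedFieldType} (l : C) {m j : nat} : (j <= m)%N ->
  eaux l m.+1 j.+1
    = (m.+1%:R + (l - 1)) * eaux l m j - (l - 1) * j%:R * eaux l m.-1 j.-1.
Proof.
elim: j m => [|j IHj] m le_jm.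
  by rewrite /= factS natrM; ring.
case: m le_jm => // m le_jm.
have IH_succ := IHj m.+1 (ltnW le_jm).
have IH_same := IHj m le_jm.
have unfold_prev : eaux l m.+1 j = eaux l m.+1 j.+1 - (l - 1) * eaux l m j.
  by rewrite eauxS addrK.
rewrite eauxS IH_succ unfold_prev IH_same.
case: j {IHj IH_succ IH_same le_jm unfold_prev} => [|j].
  by rewrite /= !mulr0 !mul0r !subr0; ring.
by rewrite eauxS /=; ring.
Qed.

Theorem mainTheorem6 (C : numClosedFieldType) (l : C) (n k : nat) (hk : (k < n)%N) :
  dcoef l n k =
    (n%:R + (l - 1)) * dcoef l n.-1 k
    - (if k == n.-1 then 0 else (l - 1) * (n - k - 1)%:R * dcoef l n.-2 k).
Proof.
case: n hk => // m le_km.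
rewrite /dcoef /ecoef /= subSn // (eaux_three_term l (leq_subr k m)).
case: eqP => [->|_].
  by rewrite subnn /=; ring.
have -> : (m - k).-1 = (m.-1 - k)%N by rewrite -!subn1 subnAC.
by rewrite subn1 /=; ring.
Qed.
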